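(* Let $\alpha_1,\dots,\alpha_n\in\mathbb R$, $f(t)=\prod_{j=1}^n(t-\alpha_j)$, $N\ge1$, and for $i=1,\dots,N$ let $A_i\neq0$ and $b_i,c_i\in\mathbb R\setminus\{\alpha_1,\dots,\alpha_n\}$ with $f(b_i)=f(c_i)$, such that all $b_i,c_j$ ($i\neq j$) satisfy $b_i\neq c_j$, $b_i\neq b_j$, $c_i\neq c_j$. Put $B_{i,j}=\frac{b_i-\alpha_j}{c_i-\alpha_j}$, $Z_{i,j}=\frac{(b_i-b_j)(c_i-c_j)}{(b_i-c_j)(c_i-b_j)}$ for $i\neq j$, $f_i(\mathbf s)=A_i\prod_{j=1}^nB_{i,j}^{\mathbf s_j}$ for $\mathbf s\in\mathbb Z^n$, and $$\tau(\mathbf s)=\sum_{T\subseteq[N]}\ \prod_{\{i<j\}\subseteq T}Z_{i,j}\ \prod_{i\in T}f_i(\mathbf s).$$ Fix $k\in[N]$. Let $\tau^{(b_k\leftrightarrow c_k)}$ denote the function obtained by the same formula after interchanging the values of $b_k$ and $c_k$, and let $\tau^{\mathrm{adj}}$ denote the function obtained by the same formula after replacing $A_j$ by $A_j/Z_{k,j}$ for every $j\neq k$ and $A_k$ by $1/A_k$ (keeping all $b_i,c_i$). Then for all $\mathbf s\in\mathbb Z^n$, $$\tau^{(b_k\leftrightarrow c_k)}(\mathbf s)=\frac{A_k}{\prod_{j=1}^nB_{k,j}^{\mathbf s_j}}\ \tau^{\mathrm{adj}}(\mathbf s).$$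
   Context: $[N]=\{1,\dots,N\}$. Note $Z_{i,j}=Z_{j,i}$. *)

From mathcomp Require Import all_boot all_order all_algebra.
From mathcomp Require Import reals.
Set Implicit Arguments. Unset Strict Implicit. Unset Printing Implicit Defensive.
Import Order.TTheory GRing.Theory Num.Theory.
Local Open Scope ring_scope.

Section Defs.
Variables (R : realType) (n N : nat).

Definition fpoly (alpha : 'I_n -> R) (t : R) : R := \prod_(j < n) (t - alpha j).

Definition Bc (alpha : 'I_n -> R) (b c : 'I_N -> R) (i : 'I_N) (j : 'I_n) : R :=
  (b i - alpha j) / (c i - alpha j).

Definition Zc (b c : 'I_N -> R) (i j : 'I_N) : R :=
  ((b i - b j) * (c i - c j)) / ((b i - c j) * (c i - b j)).

Definition fi (alpha : 'I_n -> R) (A b c : 'I_N -> R) (s : 'I_n -> int)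
  (i : 'I_N) : R :=
  A i * \prod_(j < n) (Bc alpha b c i j) ^ (s j).

Definition tau (alpha : 'I_n -> R) (A b c : 'I_N -> R) (s : 'I_n -> int) : R :=
  \sum_(T : {set 'I_N})
     (\prod_(i in T) \prod_(j in T | (i < j)%N) Zc b c i j) *
     \prod_(i in T) fi alpha A b c s i.

Definition swapb (b c : 'I_N -> R) (k : 'I_N) : 'I_N -> R :=
  fun i => if i == k then c k else b i.

Definition Aadj (A b c : 'I_N -> R) (k : 'I_N) : 'I_N -> R :=
  fun j => if j == k then 1 / A k else A j / Zc b c k j.

End Defs.

(* Pair each subset T with T △ {k}.  Interchanging b_k and c_k inverts every
   Z_{k,j} and turns f_k into A_k / ∏_j B_{k,j}^{s_j}, while the adjusted
   coefficients divide each f_j by Z_{k,j}; hence the term of the left-hand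
   side indexed by T is A_k / ∏_j B_{k,j}^{s_j} times the term of τ^adj
   indexed by T △ {k}. *)

From mathcomp Require Import all_boot all_order all_algebra.
From mathcomp Require Import reals.
From mathcomp Require Import ring.
Set Implicit Arguments. Unset Strict Implicit. Unset Printing Implicit Defensive.
Import Order.TTheory GRing.Theory Num.Theory.
Local Open Scope ring_scope.

Section SubsetSum.
Variables (R : fieldType) (N : nat).

Definition pair_weight (Z : 'I_N -> 'I_N -> R) (T : {set 'I_N}) : R :=
  \prod_(i in T) \prod_(j in T | (i < j)%N) Z i j.

Definition subset_term (Z : 'I_N -> 'I_N -> R) (f : 'I_N -> R)
    (T : {set 'I_N}) : R :=
  pair_weight Z T * \prod_(i in T) f i.

Definition subset_sum (Z : 'I_N -> 'I_N -> R) (f : 'I_N -> R) : R :=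
  \sum_(T : {set 'I_N}) subset_term Z f T.

Lemma pair_weight_setU1 (Z : 'I_N -> 'I_N -> R) (S : {set 'I_N}) (k : 'I_N) :
  (forall i j, Z i j = Z j i) -> k \notin S ->
  pair_weight Z (k |: S) = pair_weight Z S * \prod_(j in S) Z k j.
Proof.
move=> Zsym kS; rewrite /pair_weight.
under eq_bigr => i _ do rewrite big_mkcondr (big_setU1 _ kS) -big_mkcondr /=.
rewrite (big_setU1 _ kS) /= ltnn mul1r big_split /=.
rewrite [X in _ = _ * X](bigID (fun j : 'I_N => (j < k)%N)) /= -big_mkcondr /=.
rewrite (eq_bigr (fun j => Z k j) (fun j _ => Zsym j k)).
rewrite [X in _ = _ * (_ * X)](eq_bigl (fun j => (j \in S) && (k < j)%N)).
  by ring.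
move=> j /=; case jS: (j \in S) => //=.
have kj : nat_of_ord k != nat_of_ord j.
  by apply/eqP => /val_inj kj; rewrite kj jS in kS.
by rewrite -leqNgt leq_eqVlt (negbTE kj).
Qed.

Section Toggle.
Variables (k : 'I_N) (Z Z' : 'I_N -> 'I_N -> R) (f f' g : 'I_N -> R) (a : R).
Hypotheses (Zsym : forall i j, Z i j = Z j i) (Z'sym : forall i j, Z' i j = Z' j i).
Hypotheses (Z'_off : forall i j, i != k -> j != k -> Z' i j = Z i j)
           (Z'_k : forall j, j != k -> Z' k j = (Z k j)^-1)
           (Zk_neq0 : forall j, j != k -> Z k j != 0).
Hypotheses (f'_off : forall i, i != k -> f' i = f i) (f'_k : f' k = a)
           (g_off : forall i, i != k -> g i = f i / Z k i) (g_k : g k = a^-1)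
           (a_neq0 : a != 0).

Let neq_of_notin (S : {set 'I_N}) i : k \notin S -> i \in S -> i != k.
Proof. by move=> kS iS; apply: contraNneq kS => <-. Qed.

Let pair_weight_off (S : {set 'I_N}) :
  k \notin S -> pair_weight Z' S = pair_weight Z S.
Proof.
move=> kS; apply: eq_bigr => i iS; apply: eq_bigr => j /andP[jS _].
by rewrite Z'_off ?(neq_of_notin kS).
Qed.

Let prod_f'_off (S : {set 'I_N}) :
  k \notin S -> \prod_(i in S) f' i = \prod_(i in S) f i.
Proof. by move=> kS; apply: eq_bigr => i iS; rewrite f'_off ?(neq_of_notin kS). Qed.

Let prod_Z'_k (S : {set 'I_N}) : k \notin S ->
  \prod_(j in S) Z' k j = (\prod_(j in S) Z k j)^-1.
Proof.
move=> kS; rewrite -prodfV; apply: eq_bigr => j jS.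
by rewrite Z'_k ?(neq_of_notin kS).
Qed.

Let prod_g_off (S : {set 'I_N}) : k \notin S ->
  \prod_(i in S) g i = \prod_(i in S) f i * (\prod_(i in S) Z k i)^-1.
Proof.
move=> kS; rewrite -prodfV -big_split; apply: eq_bigr => i iS.
by rewrite g_off ?(neq_of_notin kS).
Qed.

Let term_notin (S : {set 'I_N}) :
  k \notin S -> subset_term Z' f' S = a * subset_term Z g (k |: S).
Proof.
move=> kS; rewrite /subset_term pair_weight_setU1 // big_setU1 //= g_k.
rewrite pair_weight_off // prod_f'_off // prod_g_off //.
have : \prod_(j in S) Z k j != 0.
  by apply/prodf_neq0 => j jS; rewrite Zk_neq0 ?(neq_of_notin kS).
move: (pair_weight Z S) (\prod_(j in S) Z k j) (\prod_(i in S) f i) => P z F z0.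
by field; rewrite a_neq0 z0.
Qed.

Let term_in (S : {set 'I_N}) :
  k \notin S -> subset_term Z' f' (k |: S) = a * subset_term Z g S.
Proof.
move=> kS; rewrite /subset_term pair_weight_setU1 // big_setU1 //= f'_k.
rewrite pair_weight_off // prod_f'_off // prod_g_off // prod_Z'_k //.
by ring.
Qed.

Lemma subset_sum_toggle : subset_sum Z' f' = a * subset_sum Z g.
Proof.
pose toggle (T : {set 'I_N}) := if k \in T then T :\ k else k |: T.
have toggleK : involutive toggle.
  move=> T; rewrite /toggle; have [kT|kT] := boolP (k \in T).
    by rewrite setD11 setD1K.
  by rewrite setU11 setU1K.
rewrite /subset_sum (reindex_inj (inv_inj toggleK)) mulr_sumr.
apply: eq_bigr => T _; rewrite /toggle; have [kT|kT] := boolP (k \in T).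
  by rewrite term_notin ?setD11 ?setD1K.
by rewrite term_in.
Qed.

End Toggle.
End SubsetSum.

Section Tau.
Variables (R : realType) (n N : nat) (alpha : 'I_n -> R) (b c : 'I_N -> R).

Lemma tauE (A : 'I_N -> R) (s : 'I_n -> int) :
  tau alpha A b c s = subset_sum (Zc b c) (fi alpha A b c s).
Proof. by []. Qed.

Lemma Zc_sym i j : Zc b c i j = Zc b c j i.
Proof. by rewrite /Zc; congr (_ / _); ring. Qed.

Lemma Zc_neq0 i j :
  b i != c j -> b j != c i -> b i != b j -> c i != c j -> Zc b c i j != 0.
Proof.
move=> bc cb bb cc.
by rewrite /Zc mulf_neq0 ?invr_neq0 ?mulf_neq0 // subr_eq0 // eq_sym.
Qed.

Variable k : 'I_N.

Lemma Zc_swapb_off i j : i != k -> j != k ->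
  Zc (swapb b c k) (swapb c b k) i j = Zc b c i j.
Proof. by move=> ik jk; rewrite /Zc /swapb (negbTE ik) (negbTE jk). Qed.

Lemma Zc_swapb_k j : j != k ->
  Zc (swapb b c k) (swapb c b k) k j = (Zc b c k j)^-1.
Proof.
by move=> jk; rewrite /Zc /swapb eqxx (negbTE jk) invf_div; congr (_ / _); ring.
Qed.

Lemma fi_swapb_off A s i : i != k ->
  fi alpha A (swapb b c k) (swapb c b k) s i = fi alpha A b c s i.
Proof. by move=> ik; rewrite /fi /Bc /swapb (negbTE ik). Qed.

Lemma fi_swapb_k A s :
  fi alpha A (swapb b c k) (swapb c b k) s k =
  A k / \prod_(j < n) Bc alpha b c k j ^ s j.
Proof.
rewrite /fi -prodfV; congr (_ * _); apply: eq_bigr => j _.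
by rewrite expfV /Bc /swapb !eqxx invf_div.
Qed.

Lemma fi_Aadj_off A s i : i != k ->
  fi alpha (Aadj A b c k) b c s i = fi alpha A b c s i / Zc b c k i.
Proof. by move=> ik; rewrite /fi /Aadj (negbTE ik) mulrAC. Qed.

Lemma fi_Aadj_k A s :
  fi alpha (Aadj A b c k) b c s k =
  (A k / \prod_(j < n) Bc alpha b c k j ^ s j)^-1.
Proof. by rewrite /fi /Aadj eqxx invf_div div1r mulrC. Qed.

End Tau.

Theorem proposition8p8 (R : realType) (n N : nat) (alpha : 'I_n -> R)
  (A b c : 'I_N -> R)
  (hA : forall i, A i != 0)
  (hb : forall i j, b i != alpha j)
  (hc : forall i j, c i != alpha j)
  (hf : forall i, fpoly alpha (b i) = fpoly alpha (c i))
  (hdist : forall i j, i != j -> [/\ b i != c j, b i != b j & c i != c j])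
  (k : 'I_N) (s : 'I_n -> int) :
  tau alpha A (swapb b c k) (swapb c b k) s =
  A k / (\prod_(j < n) (Bc alpha b c k j) ^ (s j)) *
  tau alpha (Aadj A b c k) b c s.
Proof.
have B_neq0 : \prod_(j < n) Bc alpha b c k j ^ s j != 0.
  apply/prodf_neq0 => j _; apply: expfz_neq0.
  by rewrite /Bc mulf_neq0 ?invr_neq0 // subr_eq0.
rewrite !tauE; apply: subset_sum_toggle.
- exact: Zc_sym.
- exact: Zc_sym.
- exact: Zc_swapb_off.
- exact: Zc_swapb_k.
- move=> j jk; have kj : k != j by rewrite eq_sym.
  have [bc bb cc] := hdist k j kj; have [cb _ _] := hdist j k jk.
  exact: Zc_neq0.
- exact: fi_swapb_off.
- exact: fi_swapb_k.
- exact: fi_Aadj_off.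
- exact: fi_Aadj_k.
- by rewrite mulf_neq0 ?invr_neq0.
Qed.
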